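(* Let $\mathbf{S}=\langle S;\to,\neg,{}^+,{}^-,1\rangle$ be a strong quasi-Wajsberg* algebra. For $x,y\in S$ define $0:=x\to x$, $x\oplus y:=\neg x\to y$ and $-x:=\neg x$. Then $g(\mathbf{S})=\langle S;\oplus,-,{}^+,{}^-,0,1\rangle$ is a strong quasi-MV* algebra (with $x\vee y:=(x^{+}\oplus(-x^{+}\oplus y^{+})^{+})\oplus(x^{-}\oplus(-x^{-}\oplus y^{-})^{+})$).
   Context: A quasi-Wajsberg* algebra is an algebra $\langle W;\to,\neg,{}^+,{}^-,1\rangle$ of type $\langle 2,1,1,1,0\rangle$ (${}^+,{}^-$ bind more tightly than $\neg$, which binds more tightly than $\to$) such that for all $x,y,z$: (1) $x\to y=\neg y\to\neg x$; (2) $(x\to 1)\to((y\to 1)\to z)=(y\to 1)\to((x\to 1)\to z)$; (3) $(1\to x)\to 1=1$; (4) $(z\to z)\to(x\to y)=x\to y$; (5) $(1\to 1)\to x^{+}=((1\to 1)\to x)^{+}=(x\to 1)\to 1$ and $(1\to 1)\to x^{-}=((1\to 1)\to x)^{-}=(x\to\neg 1)\to\neg 1$; (6) $x\to y=(y^{+}\to x^{-})\to(x^{+}\to y^{-})$; (7) $\neg(x\to y)=y\to x$; (8) $\neg\neg x=x$; (9) $(x\to(\neg x\to y))^{+}=x^{+}\to(\neg x^{+}\to y^{+})$; (10) $x\vee y=y\vee x$; (11) $x\vee(y\vee z)=(x\vee y)\vee z$; (12) $x\to(y\vee z)=(x\to y)\vee(x\to z)$; where $x\vee y:=((x^{+}\to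 y^{+})^{+}\to(\neg x)^{-})\to((y^{-}\to x^{-})^{-}\to x^{-})$. In a quasi-Wajsberg* algebra $x\to x$ does not depend on $x$. A strong quasi-Wajsberg* algebra is a quasi-Wajsberg* algebra satisfying $x^+=(1\to 1)\to x^+$ and $x^-=(1\to 1)\to x^-$. A quasi-MV* algebra is an algebra $\langle A;\oplus,-,{}^{+},{}^{-},0,1\rangle$ of type $\langle 2,1,1,1,0,0\rangle$ ($-1$ denotes $-(1)$) such that for all $x,y,z$: $x\oplus y=y\oplus x$; $(1\oplus x)\oplus(y\oplus(1\oplus z))=((1\oplus x)\oplus y)\oplus(1\oplus z)$; $(x\oplus 1)\oplus 1=1$; $(x\oplus y)\oplus 0=x\oplus y$; $x^{+}\oplus 0=(x\oplus 0)^{+}=1\oplus(-1\oplus x)$ and $x^{-}\oplus 0=(x\oplus 0)^{-}=-1\oplus(1\oplus x)$; $x\oplus y=(x^{+}\oplus y^{+})\oplus(x^{-}\oplus y^{-})$; $0=-0$; $x\oplus(-x)=0$; $-(x\oplus y)=(-x)\oplus(-y)$; $-(-x)=x$; $(-x\oplus(x\oplus y))^{+}=-x^{+}\oplus(x^{+}\oplus y^{+})$; $x\vee y=y\vee x$; $x\vee(y\vee z)=(x\vee y)\vee z$; $x\oplus(y\vee z)=(x\oplus y)\vee(x\oplus z)$, with $\vee$ as in the claim. A strong quasi-MV* algebra is a quasi-MV* algebra satisfying $x^+=x^+\oplus 0$ and $x^-=x^-\oplus 0$. *)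

Definition qw_join {W : Type} (imp : W -> W -> W) (neg : W -> W)
  (pl mi : W -> W) (x y : W) : W :=
  imp (imp (pl (imp (pl x) (pl y))) (mi (neg x)))
      (imp (mi (imp (mi y) (mi x))) (mi x)).

Definition quasi_wajsberg_star {W : Type} (imp : W -> W -> W) (neg : W -> W)
  (pl mi : W -> W) (one : W) : Prop :=
  let join := qw_join imp neg pl mi in
  (forall x y, imp x y = imp (neg y) (neg x)) /\
  (forall x y z, imp (imp x one) (imp (imp y one) z)
                 = imp (imp y one) (imp (imp x one) z)) /\
  (forall x, imp (imp one x) one = one) /\
  (forall x y z, imp (imp z z) (imp x y) = imp x y) /\
  (forall x, imp (imp one one) (pl x) = pl (imp (imp one one) x) /\
             pl (imp (imp one one) x) = imp (imp x one) one) /\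
  (forall x, imp (imp one one) (mi x) = mi (imp (imp one one) x) /\
             mi (imp (imp one one) x) = imp (imp x (neg one)) (neg one)) /\
  (forall x y, imp x y = imp (imp (pl y) (mi x)) (imp (pl x) (mi y))) /\
  (forall x y, neg (imp x y) = imp y x) /\
  (forall x, neg (neg x) = x) /\
  (forall x y, pl (imp x (imp (neg x) y)) = imp (pl x) (imp (neg (pl x)) (pl y))) /\
  (forall x y, join x y = join y x) /\
  (forall x y z, join x (join y z) = join (join x y) z) /\
  (forall x y z, imp x (join y z) = join (imp x y) (imp x z)).

Definition strong_quasi_wajsberg_star {W : Type} (imp : W -> W -> W) (neg : W -> W)
  (pl mi : W -> W) (one : W) : Prop :=
  quasi_wajsberg_star imp neg pl mi one /\
  (forall x, pl x = imp (imp one one) (pl x)) /\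
  (forall x, mi x = imp (imp one one) (mi x)).

Definition qmv_join {A : Type} (oplus : A -> A -> A) (opp : A -> A)
  (pl mi : A -> A) (x y : A) : A :=
  oplus (oplus (pl x) (pl (oplus (opp (pl x)) (pl y))))
        (oplus (mi x) (pl (oplus (opp (mi x)) (mi y)))).

Definition quasi_MV_star {A : Type} (oplus : A -> A -> A) (opp : A -> A)
  (pl mi : A -> A) (zero one : A) : Prop :=
  let join := qmv_join oplus opp pl mi in
  (forall x y, oplus x y = oplus y x) /\
  (forall x y z, oplus (oplus one x) (oplus y (oplus one z))
                 = oplus (oplus (oplus one x) y) (oplus one z)) /\
  (forall x, oplus (oplus x one) one = one) /\
  (forall x y, oplus (oplus x y) zero = oplus x y) /\
  (forall x, oplus (pl x) zero = pl (oplus x zero) /\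
             pl (oplus x zero) = oplus one (oplus (opp one) x)) /\
  (forall x, oplus (mi x) zero = mi (oplus x zero) /\
             mi (oplus x zero) = oplus (opp one) (oplus one x)) /\
  (forall x y, oplus x y = oplus (oplus (pl x) (pl y)) (oplus (mi x) (mi y))) /\
  zero = opp zero /\
  (forall x, oplus x (opp x) = zero) /\
  (forall x y, opp (oplus x y) = oplus (opp x) (opp y)) /\
  (forall x, opp (opp x) = x) /\
  (forall x y, pl (oplus (opp x) (oplus x y))
               = oplus (opp (pl x)) (oplus (pl x) (pl y))) /\
  (forall x y, join x y = join y x) /\
  (forall x y z, join x (join y z) = join (join x y) z) /\
  (forall x y z, oplus x (join y z) = join (oplus x y) (oplus x z)).

Definition strong_quasi_MV_star {A : Type} (oplus : A -> A -> A) (opp : A -> A)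
  (pl mi : A -> A) (zero one : A) : Prop :=
  quasi_MV_star oplus opp pl mi zero one /\
  (forall x, pl x = oplus (pl x) zero) /\
  (forall x, mi x = oplus (mi x) zero).

(* The translation g(S): x (+) y := ~x -> y, -x := ~x, 0 := x -> x
   (independent of x in a quasi-Wajsberg* algebra; we take x := 1). *)
Definition g_oplus {W : Type} (imp : W -> W -> W) (neg : W -> W) (x y : W) : W :=
  imp (neg x) y.
Definition g_zero {W : Type} (imp : W -> W -> W) (one : W) : W := imp one one.

From mathcomp Require Import ssreflect ssrfun.

(* Axiom (2) is the exchange law
   [(~1 (+) x) (+) ((~1 (+) y) (+) z) = (~1 (+) y) (+) ((~1 (+) x) (+) z)].
   Negation is an involution with [~(x (+) y) = ~x (+) ~y], so it carries this
   law to the one with [1] in place of [~1], which together with commutativity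
   is the restricted associativity of (+).  Strongness gives
   [x^+ = (x -> 1) -> 1] and [x^- = (x -> ~1) -> ~1], hence [~x^+ = (~x)^-];
   with it the two joins coincide term by term, and the remaining quasi-MV*
   axioms are the Wajsberg ones read through [x (+) 0 = (1 -> 1) -> x]. *)

Section QuasiWajsbergStarAsQuasiMVStar.

Variables (S : Type) (imp : S -> S -> S) (neg pl mi : S -> S) (one : S).

Local Notation oplus := (g_oplus imp neg).
Local Notation zero := (g_zero imp one).
Local Notation wjoin := (qw_join imp neg pl mi).
Local Notation join := (qmv_join oplus neg pl mi).

Hypothesis imp_contra : forall x y, imp x y = imp (neg y) (neg x).
Hypothesis imp_exchange : forall x y z,
  imp (imp x one) (imp (imp y one) z) = imp (imp y one) (imp (imp x one) z).
Hypothesis imp_one_top : forall x, imp (imp one x) one = one.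
Hypothesis imp_refl_imp : forall x y z, imp (imp z z) (imp x y) = imp x y.
Hypothesis pl_zero_imp : forall x,
  imp (imp one one) (pl x) = pl (imp (imp one one) x) /\
  pl (imp (imp one one) x) = imp (imp x one) one.
Hypothesis mi_zero_imp : forall x,
  imp (imp one one) (mi x) = mi (imp (imp one one) x) /\
  mi (imp (imp one one) x) = imp (imp x (neg one)) (neg one).
Hypothesis imp_pl_mi : forall x y,
  imp x y = imp (imp (pl y) (mi x)) (imp (pl x) (mi y)).
Hypothesis neg_imp : forall x y, neg (imp x y) = imp y x.
Hypothesis negK : involutive neg.
Hypothesis pl_imp_neg : forall x y,
  pl (imp x (imp (neg x) y)) = imp (pl x) (imp (neg (pl x)) (pl y)).
Hypothesis wjoinC : forall x y, wjoin x y = wjoin y x.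
Hypothesis wjoinA : forall x y z, wjoin x (wjoin y z) = wjoin (wjoin x y) z.
Hypothesis imp_wjoinDr : forall x y z,
  imp x (wjoin y z) = wjoin (imp x y) (imp x z).
Hypothesis pl_strong : forall x, pl x = imp (imp one one) (pl x).
Hypothesis mi_strong : forall x, mi x = imp (imp one one) (mi x).

Lemma neg_zero : neg (imp one one) = imp one one.
Proof. exact: neg_imp. Qed.

Lemma imp_refl x : imp x x = imp one one.
Proof.
by rewrite -[RHS](imp_refl_imp one one x) -[RHS]neg_imp imp_refl_imp neg_imp.
Qed.

Lemma pl_strongE x : pl x = imp (imp x one) one.
Proof. by rewrite pl_strong (proj1 (pl_zero_imp x)) (proj2 (pl_zero_imp x)). Qed.

Lemma mi_strongE x : mi x = imp (imp x (neg one)) (neg one).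
Proof. by rewrite mi_strong (proj1 (mi_zero_imp x)) (proj2 (mi_zero_imp x)). Qed.

Lemma neg_pl x : neg (pl x) = mi (neg x).
Proof.
by rewrite pl_strongE mi_strongE neg_imp [RHS]imp_contra negK neg_imp -imp_contra.
Qed.

Lemma neg_mi x : neg (mi x) = pl (neg x).
Proof. by rewrite -[in LHS](negK x) -neg_pl negK. Qed.

Lemma g_oplusC x y : oplus x y = oplus y x.
Proof. by rewrite /g_oplus imp_contra negK. Qed.

Lemma g_oplusr0 x : oplus x zero = imp (imp one one) x.
Proof. by rewrite g_oplusC /g_oplus /g_zero neg_zero. Qed.

Lemma neg_g_oplus x y : neg (oplus x y) = oplus (neg x) (neg y).
Proof. by rewrite /g_oplus neg_imp imp_contra !negK. Qed.

Lemma g_oplus_exchange_neg_one x y z :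
  oplus (oplus (neg one) x) (oplus (oplus (neg one) y) z) =
  oplus (oplus (neg one) y) (oplus (oplus (neg one) x) z).
Proof. by rewrite /g_oplus negK !neg_imp; apply: imp_exchange. Qed.

Lemma g_oplus_exchange_one x y z :
  oplus (oplus one x) (oplus (oplus one y) z) =
  oplus (oplus one y) (oplus (oplus one x) z).
Proof.
by apply: (can_inj negK); rewrite !neg_g_oplus g_oplus_exchange_neg_one.
Qed.

Lemma g_oplusA_one x y z :
  oplus (oplus one x) (oplus y (oplus one z)) =
  oplus (oplus (oplus one x) y) (oplus one z).
Proof.
by rewrite [RHS]g_oplusC g_oplus_exchange_one [oplus (oplus one z) y]g_oplusC.
Qed.

Lemma g_oplus_one_absorb x : oplus (oplus x one) one = one.
Proof. by rewrite /g_oplus neg_imp imp_one_top. Qed.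

Lemma g_oplus_oplus0 x y : oplus (oplus x y) zero = oplus x y.
Proof. by rewrite g_oplusr0 /g_oplus imp_refl_imp. Qed.

Lemma g_pl_oplus0 x : oplus (pl x) zero = pl (oplus x zero).
Proof. by rewrite !g_oplusr0; exact: (proj1 (pl_zero_imp x)). Qed.

Lemma g_pl_oplus0E x : pl (oplus x zero) = oplus one (oplus (neg one) x).
Proof.
by rewrite g_oplusr0 (proj2 (pl_zero_imp x)) /g_oplus negK imp_contra neg_imp.
Qed.

Lemma g_mi_oplus0 x : oplus (mi x) zero = mi (oplus x zero).
Proof. by rewrite !g_oplusr0; exact: (proj1 (mi_zero_imp x)). Qed.

Lemma g_mi_oplus0E x : mi (oplus x zero) = oplus (neg one) (oplus one x).
Proof.
by rewrite g_oplusr0 (proj2 (mi_zero_imp x)) /g_oplus negK imp_contra negK neg_imp.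
Qed.

Lemma g_oplus_pl_mi x y :
  oplus x y = oplus (oplus (pl x) (pl y)) (oplus (mi x) (mi y)).
Proof. by rewrite /g_oplus imp_pl_mi neg_imp neg_pl neg_mi. Qed.

Lemma g_zero_neg : zero = neg zero.
Proof. by rewrite /g_zero neg_zero. Qed.

Lemma g_oplusN x : oplus x (neg x) = zero.
Proof. exact: imp_refl. Qed.

Lemma g_pl_oplus x y :
  pl (oplus (neg x) (oplus x y)) = oplus (neg (pl x)) (oplus (pl x) (pl y)).
Proof. by rewrite /g_oplus !negK pl_imp_neg. Qed.

Lemma g_joinE x y : join x y = wjoin x y.
Proof.
rewrite /qmv_join /qw_join /g_oplus !negK neg_imp neg_pl.
by rewrite [imp (mi (imp _ _)) _]imp_contra !neg_mi neg_imp.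
Qed.

Lemma g_joinC x y : join x y = join y x.
Proof. by rewrite !g_joinE; apply: wjoinC. Qed.

Lemma g_joinA x y z : join x (join y z) = join (join x y) z.
Proof. by rewrite !g_joinE; apply: wjoinA. Qed.

Lemma g_oplus_joinDr x y z : oplus x (join y z) = join (oplus x y) (oplus x z).
Proof. by rewrite !g_joinE; apply: imp_wjoinDr. Qed.

Lemma g_pl_strong x : pl x = oplus (pl x) zero.
Proof. by rewrite g_oplusr0 -pl_strong. Qed.

Lemma g_mi_strong x : mi x = oplus (mi x) zero.
Proof. by rewrite g_oplusr0 -mi_strong. Qed.

End QuasiWajsbergStarAsQuasiMVStar.

Theorem proposition3p5 (S : Type) (imp : S -> S -> S) (neg : S -> S)
  (pl mi : S -> S) (one : S) :
  strong_quasi_wajsberg_star imp neg pl mi one ->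
  strong_quasi_MV_star (g_oplus imp neg) neg pl mi (g_zero imp one) one.
Proof.
case=> -[? [? [? [? [? [? [? [? [? [? [? [? ?]]]]]]]]]]]] [? ?].
do !split.
- exact: g_oplusC.
- exact: g_oplusA_one.
- exact: g_oplus_one_absorb.
- exact: g_oplus_oplus0.
- exact: g_pl_oplus0.
- exact: g_pl_oplus0E.
- exact: g_mi_oplus0.
- exact: g_mi_oplus0E.
- exact: g_oplus_pl_mi.
- exact: g_zero_neg.
- exact: g_oplusN.
- exact: neg_g_oplus.
- by [].
- exact: g_pl_oplus.
- exact: g_joinC.
- exact: g_joinA.
- exact: g_oplus_joinDr.
- exact: g_pl_strong.
- exact: g_mi_strong.
Qed.
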